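(* Let $f_3:\mathbb{T}\times\mathbb{R}\to\mathbb{T}\times\mathbb{R}$ be the map $(\psi,w)\mapsto(\psi_1,w_1)$ with $\psi_1=\psi+w$, $w_1=w+2\pi(\cos\psi_1-1)-3\sin\psi_1$ (the case $\mu=3$, third order resonance). Then $f_3^3=(\psi_3,w_3)$ satisfies $$\psi_3=\psi-\pi(3\psi^2+2\psi w)+O_3(\psi,w),\qquad w_3=w+\pi(6\psi^2+6\psi w+w^2)+O_3(\psi,w),$$ the function $G(w_3,\psi)$ defined by $w_3=w+\partial_\psi G(w_3,\psi)$, $\psi_3=\psi-\partial_{w_3}G(w_3,\psi)$, $G=O_3$, is $$G(w_3,\psi)=\pi\,\psi(\psi+w_3)(2\psi+w_3)+O_4(\psi,w_3),$$ which has no strict extremum at the origin, and the fixed point $(0,0)$ is locally unstable under $f_3$.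
   Context: $\mathbb{T}=\mathbb{R}/2\pi\mathbb{Z}$; $O_k(\psi,w)$ denotes terms of total order at least $k$ in $(\psi,w)$. A fixed point $p_{\rm s}$ is locally stable if for every $\epsilon>0$ there exists $\delta>0$ such that $\|p-p_{\rm s}\|<\delta$ implies $\|f^n(p)-p_{\rm s}\|<\epsilon$ for all $n\in\mathbb{Z}$; otherwise it is locally unstable. *)

From Stdlib Require Import Reals Lra ZArith.
Open Scope R_scope.

(* The map f_3 on the lift R x R of T x R (psi is the angle, taken mod 2*PI). *)
Definition f3 (p : R * R) : R * R :=
  let psi1 := fst p + snd p in
  (psi1, snd p + 2 * PI * (cos psi1 - 1) - 3 * sin psi1).

Definition f3inv (p : R * R) : R * R :=
  let w := snd p - 2 * PI * (cos (fst p) - 1) + 3 * sin (fst p) in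
  (fst p - w, w).

Definition zorbit (f finv : R * R -> R * R) (n : Z) (p : R * R) : R * R :=
  match n with
  | Z0 => p
  | Zpos k => Nat.iter (Pos.to_nat k) f p
  | Zneg k => Nat.iter (Pos.to_nat k) finv p
  end.

Definition T_near (x a eps : R) : Prop :=
  exists k : Z, Rabs (x - a - 2 * PI * IZR k) < eps.

Definition locally_stable (f finv : R * R -> R * R) (ps : R * R) : Prop :=
  forall eps, 0 < eps -> exists delta, 0 < delta /\
    forall p : R * R,
      T_near (fst p) (fst ps) delta -> Rabs (snd p - snd ps) < delta ->
      forall n : Z,
        T_near (fst (zorbit f finv n p)) (fst ps) eps /\
        Rabs (snd (zorbit f finv n p) - snd ps) < eps.

Definition bigO (k : nat) (h : R -> R -> R) : Prop :=
  exists C r, 0 < r /\ forall x y, Rabs x < r -> Rabs y < r ->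
    Rabs (h x y) <= C * (Rabs x + Rabs y) ^ k.

Definition strict_local_min0 (G : R -> R -> R) : Prop :=
  exists r, 0 < r /\ forall x y, Rabs x < r -> Rabs y < r ->
    (x, y) <> (0, 0) -> G 0 0 < G x y.

Definition strict_local_max0 (G : R -> R -> R) : Prop :=
  exists r, 0 < r /\ forall x y, Rabs x < r -> Rabs y < r ->
    (x, y) <> (0, 0) -> G x y < G 0 0.

(* Expanding the three steps of [f3] to second order gives the 2-jet of [f3^3].
   A single step (psi, w) |-> (psi', w') has the generating function
   w^2/2 + V(psi') with V' = 2 pi (cos - 1) - 3 sin, so their sum, corrected by
   the Legendre term (psi - psi3) w3, is an action whose partial derivatives
   do not involve the intermediate points.  Since dw3/dw is close to 1, w can
   be eliminated in favour of w3, giving G with dG/dpsi = w3 - w and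
   dG/dw3 = psi - psi3; its cubic part pi psi (psi + w3) (2 psi + w3) comes from
   the expansion of the action, and G(0, psi) = 2 pi psi^3 + O(psi^4) changes
   sign.  Instability: in the cone |psi| <= w / 10 the map [f3^3] increases w
   by at least (2/5) w^2 and preserves the cone, so every orbit of (0, w0),
   w0 > 0, leaves a fixed neighbourhood of the origin. *)

From Stdlib Require Import Reals Lra Lia ZArith ClassicalEpsilon Classical_Prop.
Open Scope R_scope.

Definition l1norm (x y : R) := Rabs x + Rabs y.

(* Unlike [bigO], [isO] asks for the bound on the whole unit l1-ball, so that
   the constants of products and compositions can be combined without
   shrinking radii. *)
Definition isO (k : nat) (f : R -> R -> R) : Prop :=
  exists C, 0 <= C /\
    forall x y, l1norm x y <= 1 -> Rabs (f x y) <= C * l1norm x y ^ k.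

Lemma l1norm_ge0 x y : 0 <= l1norm x y.
Proof. unfold l1norm; pose proof (Rabs_pos x); pose proof (Rabs_pos y); lra. Qed.

Lemma pow_le1_antimono (s : R) (j k : nat) :
  0 <= s -> s <= 1 -> (j <= k)%nat -> s ^ k <= s ^ j.
Proof.
  intros H0 H1 Hjk; induction Hjk as [|m _ IH]; [lra|].
  simpl; apply Rle_trans with (1 * s ^ m); [|lra].
  apply Rmult_le_compat_r; [apply pow_le|]; auto.
Qed.

Lemma Rabs_le_inv a b : Rabs a <= b -> - b <= a <= b.
Proof. unfold Rabs; destruct (Rcase_abs a); lra. Qed.

Lemma isO_ext k f g : (forall x y, f x y = g x y) -> isO k f -> isO k g.
Proof. intros E [C [HC H]]; exists C; split; auto; intros x y Hs; rewrite <- E; auto. Qed.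

Lemma isO_weaken k k' f : (k <= k')%nat -> isO k' f -> isO k f.
Proof.
  intros Hk [C [HC H]]; exists C; split; auto; intros x y Hs.
  eapply Rle_trans; [apply H; auto|]; apply Rmult_le_compat_l; auto.
  apply pow_le1_antimono; auto; apply l1norm_ge0.
Qed.

Lemma isO_add k f g : isO k f -> isO k g -> isO k (fun x y => f x y + g x y).
Proof.
  intros [C1 [H1 F1]] [C2 [H2 F2]]; exists (C1 + C2); split; [lra|].
  intros x y Hs; eapply Rle_trans; [apply Rabs_triang|].
  specialize (F1 x y Hs); specialize (F2 x y Hs); lra.
Qed.

Lemma isO_opp k f : isO k f -> isO k (fun x y => - f x y).
Proof. intros [C [H F]]; exists C; split; auto; intros x y Hs; rewrite Rabs_Ropp; auto. Qed.

Lemma isO_sub k f g : isO k f -> isO k g -> isO k (fun x y => f x y - g x y).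
Proof. intros; apply isO_add, isO_opp; auto. Qed.

Lemma isO_mul i j f g :
  isO i f -> isO j g -> isO (i + j) (fun x y => f x y * g x y).
Proof.
  intros [C1 [H1 F1]] [C2 [H2 F2]]; exists (C1 * C2); split; [apply Rmult_le_pos; auto|].
  intros x y Hs; rewrite Rabs_mult, pow_add.
  replace (C1 * C2 * (l1norm x y ^ i * l1norm x y ^ j))
    with ((C1 * l1norm x y ^ i) * (C2 * l1norm x y ^ j)) by ring.
  apply Rmult_le_compat; try apply Rabs_pos; auto.
Qed.

Lemma isO_const c : isO 0 (fun _ _ => c).
Proof. exists (Rabs c); split; [apply Rabs_pos|]; intros; simpl; lra. Qed.

Lemma isO_fst : isO 1 (fun x y => x).
Proof.
  exists 1; split; [lra|]; intros x y _; unfold l1norm; simpl.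
  pose proof (Rabs_pos y); lra.
Qed.

Lemma isO_snd : isO 1 (fun x y => y).
Proof.
  exists 1; split; [lra|]; intros x y _; unfold l1norm; simpl.
  pose proof (Rabs_pos x); lra.
Qed.

Lemma isO_pow k n f : isO k f -> isO (k * n) (fun x y => f x y ^ n).
Proof.
  intros H; induction n as [|n IH].
  - rewrite Nat.mul_0_r; apply (isO_ext 0 (fun _ _ => 1)); [reflexivity|apply isO_const].
  - replace (k * S n)%nat with (k + k * n)%nat by lia; apply isO_mul; auto.
Qed.

Lemma isO_div_const k f c : isO k f -> isO k (fun x y => f x y / c).
Proof.
  intros H; rewrite <- (Nat.add_0_r k); apply isO_mul; [auto|apply isO_const].
Qed.

Lemma isO_comp (g : R -> R) K m f :
  0 <= K -> (forall t, Rabs (g t) <= K * Rabs t ^ m) -> isO 1 f ->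
  isO m (fun x y => g (f x y)).
Proof.
  intros HK Hg [C [HC F]]; exists (K * C ^ m); split.
  { apply Rmult_le_pos; auto; apply pow_le; auto. }
  intros x y Hs; eapply Rle_trans; [apply Hg|].
  rewrite Rmult_assoc; apply Rmult_le_compat_l; auto.
  rewrite <- Rpow_mult_distr; apply pow_incr; split; [apply Rabs_pos|].
  specialize (F x y Hs); simpl in F; lra.
Qed.

(* Proves [isO k e] for a polynomial expression [e] in [x], [y] and in
   functions whose order is an assumption, splitting the order of a product
   among its factors. *)
Ltac isO_auto :=
  match goal with
  | |- isO ?k Rmult => change (isO k (fun x y => x * y)); isO_auto
  | |- isO ?k Rplus => change (isO k (fun x y => x + y)); isO_auto
  | |- isO ?k Rminus => change (isO k (fun x y => x - y)); isO_auto
  | |- isO ?k ?f => first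
      [ assumption
      | eapply isO_weaken; [|eassumption]; lia
      | apply isO_const
      | eapply isO_weaken; [|apply isO_fst]; lia
      | eapply isO_weaken; [|apply isO_snd]; lia
      | apply isO_add; isO_auto
      | apply isO_sub; isO_auto
      | apply isO_opp; isO_auto
      | apply isO_div_const; isO_auto
      | isO_auto_mul k
      | isO_auto_pow k ]
  end
with isO_auto_mul k :=
  lazymatch goal with
  | |- isO _ (fun x y => @?f x y * @?g x y) =>
    first [ apply (isO_weaken k (0 + k)); [lia | apply isO_mul; isO_auto]
          | apply (isO_weaken k (1 + (k - 1))); [lia | apply isO_mul; isO_auto]
          | apply (isO_weaken k (2 + (k - 2))); [lia | apply isO_mul; isO_auto]
          | apply (isO_weaken k (3 + (k - 3))); [lia | apply isO_mul; isO_auto]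
          | apply (isO_weaken k (4 + (k - 4))); [lia | apply isO_mul; isO_auto] ]
  end
with isO_auto_pow k :=
  lazymatch goal with
  | |- isO _ (fun x y => @?f x y ^ ?n) =>
    first [ apply (isO_weaken k (1 * n)); [simpl; lia | apply isO_pow; isO_auto]
          | apply (isO_weaken k (2 * n)); [simpl; lia | apply isO_pow; isO_auto] ]
  end.

Lemma PI_bounds : 2 < PI <= 4.
Proof. pose proof PI2_1; pose proof PI_4; lra. Qed.

Lemma Rabs_pow_even t : t ^ 4 = Rabs t ^ 4.
Proof.
  rewrite RPow_abs, Rabs_right; [reflexivity|].
  replace (t ^ 4) with ((t ^ 2) ^ 2) by ring; apply Rle_ge, pow_le, pow2_ge_0.
Qed.

Lemma Rabs_pow_div t n c : 0 < c -> Rabs (t ^ n / c) = Rabs t ^ n / c.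
Proof.
  intros Hc; unfold Rdiv; rewrite Rabs_mult, <- RPow_abs, (Rabs_right (/ c)); auto.
  apply Rle_ge, Rlt_le, Rinv_0_lt_compat; auto.
Qed.

Lemma sin_rem_small t : Rabs t <= 1 -> Rabs (sin t - t + t ^ 3 / 6) <= Rabs t ^ 5 / 120.
Proof.
  assert (Hpos : forall u, 0 <= u <= 1 -> u - u ^ 3 / 6 <= sin u <= u - u ^ 3 / 6 + u ^ 5 / 120).
  { intros u Hu; pose proof PI2_1; destruct (sin_bound u 0) as [A B]; [lra|lra|].
    unfold sin_approx, sin_term, Factorial.fact in A, B; simpl in A, B.
    split; [lra|]; eapply Rle_trans; [apply B|]; right; field. }
  intros H; destruct (Rle_dec 0 t) as [Hp|Hn].
  - rewrite (Rabs_right t) in H |- * by lra; destruct (Hpos t) as [A B]; [lra|].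
    pose proof (pow_le t 5 Hp); rewrite Rabs_right; lra.
  - rewrite (Rabs_left t) in H |- * by lra; destruct (Hpos (- t)) as [A B]; [lra|].
    rewrite sin_neg in A, B.
    replace ((- t) ^ 3) with (- t ^ 3) in A, B by ring.
    replace ((- t) ^ 5) with (- t ^ 5) in A, B |- * by ring.
    rewrite Rabs_left1; lra.
Qed.

Lemma cos_rem_small t : Rabs t <= 1 -> Rabs (cos t - 1 + t ^ 2 / 2) <= Rabs t ^ 4 / 24.
Proof.
  intros H; apply Rabs_le_inv in H; pose proof PI2_1.
  destruct (cos_bound t 0) as [A B]; try lra.
  unfold cos_approx, cos_term, Factorial.fact in A, B; simpl in A, B.
  rewrite <- Rabs_pow_even; pose proof (pow_le (t ^ 2) 2 (pow2_ge_0 t)).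
  replace (t ^ 4) with ((t ^ 2) ^ 2) by ring.
  assert (E4 : (t ^ 2) ^ 2 / 24 = 1 + - (1 / 2) * t ^ 2 + 1 / 24 * (t * (t * (t * t))) - 1 + t ^ 2 / 2)
    by field.
  assert (E0 : 1 + - (1 / 2) * (t * t) = 1 - t ^ 2 / 2) by field.
  rewrite Rabs_right; lra.
Qed.

Definition kick (t : R) := 2 * PI * (cos t - 1) - 3 * sin t.
Definition kick_prim (t : R) := 2 * PI * (sin t - t) + 3 * (cos t - 1).
Definition kick_deriv (t : R) := - 2 * PI * sin t - 3 * cos t.

Definition kick_rem (t : R) := 2 * PI * (cos t - 1 + t ^ 2 / 2) + (- 3) * (sin t - t).
Definition kick_prim_rem (t : R) :=
  2 * PI * (sin t - t + t ^ 3 / 6) + 3 * (cos t - 1 + t ^ 2 / 2).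
Definition kick_deriv_rem (t : R) := 2 * PI * (- sin t) + 3 * (1 - cos t).

Lemma kick_expand t : kick t = - 3 * t - PI * t ^ 2 + kick_rem t.
Proof. unfold kick, kick_rem; field. Qed.

Lemma kick_prim_expand t : kick_prim t = - 3 / 2 * t ^ 2 - PI / 3 * t ^ 3 + kick_prim_rem t.
Proof. unfold kick_prim, kick_prim_rem; field. Qed.

Lemma kick_deriv_expand t : kick_deriv t = - 3 + kick_deriv_rem t.
Proof. unfold kick_deriv, kick_deriv_rem; ring. Qed.

Lemma Rabs_kick_comb X c Y : Rabs (2 * PI * X + c * Y) <= 8 * Rabs X + Rabs c * Rabs Y.
Proof.
  pose proof PI_bounds; pose proof (Rabs_pos X).
  eapply Rle_trans; [apply Rabs_triang|]; rewrite (Rabs_mult (2 * PI) X), (Rabs_mult c Y).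
  rewrite (Rabs_right (2 * PI)) by lra; nra.
Qed.

Lemma cos_rem_large t : Rabs (cos t - 1 + t ^ 2 / 2) <= 2 + Rabs t ^ 2 / 2.
Proof.
  pose proof (COS_bound t); rewrite <- (Rabs_pow_div t 2 2) by lra.
  eapply Rle_trans; [apply Rabs_triang|].
  assert (Rabs (cos t - 1) <= 2) by (apply Rabs_le; lra); lra.
Qed.

Lemma sin_rem_large t : Rabs (sin t - t + t ^ 3 / 6) <= 1 + Rabs t + Rabs t ^ 3 / 6.
Proof.
  pose proof (SIN_bound t); rewrite <- (Rabs_pow_div t 3 6) by lra.
  eapply Rle_trans; [apply Rabs_triang|]; unfold Rminus.
  eapply Rle_trans; [apply Rplus_le_compat_r, Rabs_triang|].
  rewrite Rabs_Ropp; assert (Rabs (sin t) <= 1) by (apply Rabs_le; lra); lra.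
Qed.

Lemma Rabs_sin_sub t : Rabs (sin t - t) <= Rabs (sin t - t + t ^ 3 / 6) + Rabs t ^ 3 / 6.
Proof.
  rewrite <- (Rabs_pow_div t 3 6) by lra.
  pose proof (Rabs_triang (sin t - t + t ^ 3 / 6) (- (t ^ 3 / 6))) as H.
  rewrite Rabs_Ropp in H; replace (sin t - t + t ^ 3 / 6 + - (t ^ 3 / 6)) with (sin t - t) in H
    by ring; exact H.
Qed.

(* Each bound is split at |t| = 1: Taylor with remainder below, crude
   bounds on sin and cos above. *)
Lemma kick_rem_bound t : Rabs (kick_rem t) <= 30 * Rabs t ^ 3.
Proof.
  unfold kick_rem; eapply Rle_trans; [apply Rabs_kick_comb|].
  rewrite (Rabs_left (- 3)) by lra; pose proof (Rabs_sin_sub t).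
  destruct (Rle_dec (Rabs t) 1) as [H1|H1].
  - pose proof (cos_rem_small t H1); pose proof (sin_rem_small t H1).
    pose proof (pow_le1_antimono (Rabs t) 3 4 (Rabs_pos t) H1 ltac:(lia)).
    pose proof (pow_le1_antimono (Rabs t) 3 5 (Rabs_pos t) H1 ltac:(lia)).
    pose proof (pow_le (Rabs t) 3 (Rabs_pos t)); lra.
  - pose proof (cos_rem_large t); pose proof (sin_rem_large t).
    pose proof (Rle_pow (Rabs t) 0 1 ltac:(lra) ltac:(lia)).
    pose proof (Rle_pow (Rabs t) 1 3 ltac:(lra) ltac:(lia)).
    pose proof (Rle_pow (Rabs t) 2 3 ltac:(lra) ltac:(lia)); simpl in *; lra.
Qed.

Lemma kick_prim_rem_bound t : Rabs (kick_prim_rem t) <= 30 * Rabs t ^ 4.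
Proof.
  unfold kick_prim_rem; eapply Rle_trans; [apply Rabs_kick_comb|].
  rewrite (Rabs_right 3) by lra.
  destruct (Rle_dec (Rabs t) 1) as [H1|H1].
  - pose proof (cos_rem_small t H1); pose proof (sin_rem_small t H1).
    pose proof (pow_le1_antimono (Rabs t) 4 5 (Rabs_pos t) H1 ltac:(lia)).
    pose proof (pow_le (Rabs t) 4 (Rabs_pos t)); lra.
  - pose proof (cos_rem_large t); pose proof (sin_rem_large t).
    pose proof (Rle_pow (Rabs t) 0 4 ltac:(lra) ltac:(lia)).
    pose proof (Rle_pow (Rabs t) 1 4 ltac:(lra) ltac:(lia)).
    pose proof (Rle_pow (Rabs t) 2 4 ltac:(lra) ltac:(lia)).
    pose proof (Rle_pow (Rabs t) 3 4 ltac:(lra) ltac:(lia)); simpl in *; lra.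
Qed.

Lemma kick_deriv_rem_bound t : Rabs (kick_deriv_rem t) <= 20 * Rabs t.
Proof.
  unfold kick_deriv_rem; eapply Rle_trans; [apply Rabs_kick_comb|].
  rewrite Rabs_Ropp, (Rabs_right 3) by lra.
  destruct (Rle_dec (Rabs t) 1) as [H1|H1].
  - pose proof (cos_rem_small t H1); pose proof (sin_rem_small t H1).
    pose proof (Rabs_sin_sub t).
    assert (Rabs (sin t) <= Rabs (sin t - t) + Rabs t).
    { replace (sin t) with ((sin t - t) + t) at 1 by ring; apply Rabs_triang. }
    assert (Rabs (1 - cos t) <= Rabs (cos t - 1 + t ^ 2 / 2) + Rabs t ^ 2 / 2).
    { rewrite <- (Rabs_pow_div t 2 2) by lra.
      replace (1 - cos t) with (- (cos t - 1 + t ^ 2 / 2) + t ^ 2 / 2) by ring.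
      eapply Rle_trans; [apply Rabs_triang|]; rewrite Rabs_Ropp; lra. }
    pose proof (pow_le1_antimono (Rabs t) 1 2 (Rabs_pos t) H1 ltac:(lia)).
    pose proof (pow_le1_antimono (Rabs t) 1 3 (Rabs_pos t) H1 ltac:(lia)).
    pose proof (pow_le1_antimono (Rabs t) 1 4 (Rabs_pos t) H1 ltac:(lia)).
    pose proof (pow_le1_antimono (Rabs t) 1 5 (Rabs_pos t) H1 ltac:(lia)).
    rewrite pow_1 in *; nra.
  - pose proof (SIN_bound t); pose proof (COS_bound t).
    assert (Rabs (sin t) <= 1) by (apply Rabs_le; lra).
    assert (Rabs (1 - cos t) <= 2) by (apply Rabs_le; lra); lra.
Qed.

Lemma isO_kick_rem f : isO 1 f -> isO 3 (fun x y => kick_rem (f x y)).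
Proof. intros H; apply (isO_comp kick_rem 30 3 f); [lra | apply kick_rem_bound | auto]. Qed.

Lemma isO_kick_prim_rem f : isO 1 f -> isO 4 (fun x y => kick_prim_rem (f x y)).
Proof. intros H; apply (isO_comp kick_prim_rem 30 4 f); [lra | apply kick_prim_rem_bound | auto]. Qed.

Lemma isO_kick_deriv_rem f : isO 1 f -> isO 1 (fun x y => kick_deriv_rem (f x y)).
Proof.
  intros H; apply (isO_comp kick_deriv_rem 20 1 f); [lra| |auto].
  intros t; rewrite pow_1; apply kick_deriv_rem_bound.
Qed.

Definition psi1 (x y : R) := x + y.
Definition w1 (x y : R) := y + kick (psi1 x y).
Definition psi2 (x y : R) := psi1 x y + w1 x y.
Definition w2 (x y : R) := w1 x y + kick (psi2 x y).
Definition psi3 (x y : R) := psi2 x y + w2 x y.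
Definition w3 (x y : R) := w2 x y + kick (psi3 x y).

Lemma f3_pair a b : f3 (a, b) = (a + b, b + kick (a + b)).
Proof. unfold f3, kick; simpl; f_equal; ring. Qed.

Lemma f3_iter3 x y : f3 (f3 (f3 (x, y))) = (psi3 x y, w3 x y).
Proof. rewrite !f3_pair; reflexivity. Qed.

Definition w1_jet (x y : R) := - 3 * x - 2 * y - PI * (x + y) ^ 2.
Definition psi2_jet (x y : R) := - 2 * x - y - PI * (x + y) ^ 2.
Definition w2_jet (x y : R) := 3 * x + y + 2 * PI * (x + y) ^ 2 - PI * (2 * x + y) ^ 2.
Definition psi3_jet (x y : R) := x - PI * (3 * x ^ 2 + 2 * x * y).
Definition w3_jet (x y : R) := y + PI * (6 * x ^ 2 + 6 * x * y + y ^ 2).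

Lemma isO_psi1 : isO 1 psi1.
Proof. unfold psi1; isO_auto. Qed.

Lemma isO_w1_jet : isO 3 (fun x y => w1 x y - w1_jet x y).
Proof.
  apply (isO_ext 3 (fun x y => kick_rem (psi1 x y))).
  - intros x y; unfold w1, w1_jet; rewrite kick_expand; unfold psi1; ring.
  - apply isO_kick_rem, isO_psi1.
Qed.

Lemma isO_w1 : isO 1 w1.
Proof.
  pose proof isO_w1_jet.
  apply (isO_ext 1 (fun x y => (w1 x y - w1_jet x y) + w1_jet x y)); [intros; ring|].
  unfold w1_jet; isO_auto.
Qed.

Lemma isO_psi2_jet : isO 3 (fun x y => psi2 x y - psi2_jet x y).
Proof.
  apply (isO_ext 3 (fun x y => w1 x y - w1_jet x y)); [|apply isO_w1_jet].
  intros; unfold psi2, psi2_jet, w1_jet, psi1; ring.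
Qed.

Lemma isO_psi2_lin : isO 2 (fun x y => psi2 x y - (- 2 * x - y)).
Proof.
  pose proof isO_psi2_jet.
  apply (isO_ext 2 (fun x y => (psi2 x y - psi2_jet x y) + (- PI * (x + y) ^ 2)));
    [intros; unfold psi2_jet; ring | isO_auto].
Qed.

Lemma isO_psi2 : isO 1 psi2.
Proof.
  pose proof isO_psi2_lin.
  apply (isO_ext 1 (fun x y => (psi2 x y - (- 2 * x - y)) + (- 2 * x - y)));
    [intros; ring | isO_auto].
Qed.

Lemma isO_w2_jet : isO 3 (fun x y => w2 x y - w2_jet x y).
Proof.
  pose proof isO_w1_jet; pose proof isO_psi2_jet; pose proof isO_psi2_lin.
  pose proof (isO_kick_rem _ isO_psi2).
  apply (isO_ext 3 (fun x y => (w1 x y - w1_jet x y) - 3 * (psi2 x y - psi2_jet x y)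
      - PI * ((psi2 x y - (- 2 * x - y)) * (psi2 x y + (- 2 * x - y))) + kick_rem (psi2 x y))).
  - intros x y; unfold w2; rewrite (kick_expand (psi2 x y)).
    unfold w2_jet, w1_jet, psi2_jet; ring.
  - pose proof isO_psi2; isO_auto.
Qed.

Lemma isO_w2 : isO 1 w2.
Proof.
  pose proof isO_w2_jet.
  apply (isO_ext 1 (fun x y => (w2 x y - w2_jet x y) + w2_jet x y)); [intros; ring|].
  unfold w2_jet; isO_auto.
Qed.

Lemma isO_psi3_jet : isO 3 (fun x y => psi3 x y - psi3_jet x y).
Proof.
  pose proof isO_w2_jet; pose proof isO_psi2_jet.
  apply (isO_ext 3 (fun x y => (psi2 x y - psi2_jet x y) + (w2 x y - w2_jet x y)));
    [intros; unfold psi3, psi3_jet, psi2_jet, w2_jet; ring | isO_auto].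
Qed.

Lemma isO_psi3_lin : isO 2 (fun x y => psi3 x y - x).
Proof.
  pose proof isO_psi3_jet.
  apply (isO_ext 2 (fun x y => (psi3 x y - psi3_jet x y) - PI * (3 * x ^ 2 + 2 * x * y)));
    [intros; unfold psi3_jet; ring | isO_auto].
Qed.

Lemma isO_psi3 : isO 1 psi3.
Proof.
  pose proof isO_psi3_lin.
  apply (isO_ext 1 (fun x y => (psi3 x y - x) + x)); [intros; ring | isO_auto].
Qed.

Lemma isO_w3_jet : isO 3 (fun x y => w3 x y - w3_jet x y).
Proof.
  pose proof isO_w2_jet; pose proof isO_psi3_jet; pose proof isO_psi3_lin.
  pose proof (isO_kick_rem _ isO_psi3).
  apply (isO_ext 3 (fun x y => (w2 x y - w2_jet x y) - 3 * (psi3 x y - psi3_jet x y)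
      - PI * ((psi3 x y - x) * (psi3 x y + x)) + kick_rem (psi3 x y))).
  - intros x y; unfold w3; rewrite (kick_expand (psi3 x y)).
    unfold w2_jet, psi3_jet, w3_jet; ring.
  - pose proof isO_psi3; isO_auto.
Qed.

Lemma isO_w3_lin : isO 2 (fun x y => w3 x y - y).
Proof.
  pose proof isO_w3_jet.
  apply (isO_ext 2 (fun x y => (w3 x y - w3_jet x y) + PI * (6 * x ^ 2 + 6 * x * y + y ^ 2)));
    [intros; unfold w3_jet; ring | isO_auto].
Qed.

Lemma isO_w3 : isO 1 w3.
Proof.
  pose proof isO_w3_lin.
  apply (isO_ext 1 (fun x y => (w3 x y - y) + y)); [intros; ring | isO_auto].
Qed.

Definition action (x y : R) :=
  (x - psi3 x y) * w3 x y + (y ^ 2 / 2 + kick_prim (psi1 x y))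
  + (w1 x y ^ 2 / 2 + kick_prim (psi2 x y)) + (w2 x y ^ 2 / 2 + kick_prim (psi3 x y)).

Definition G_cubic (x W : R) := PI * x * (x + W) * (2 * x + W).

Lemma isO_action : isO 4 (fun x y => action x y - G_cubic x (w3 x y)).
Proof.
  pose proof isO_w1_jet; pose proof isO_psi2_jet; pose proof isO_w2_jet.
  pose proof isO_psi3_jet; pose proof isO_w3_jet.
  pose proof isO_w1; pose proof isO_w2; pose proof isO_w3; pose proof isO_psi2; pose proof isO_psi3.
  pose proof isO_psi2_lin; pose proof isO_psi3_lin; pose proof isO_w3_lin.
  pose proof (isO_kick_prim_rem _ isO_psi1); pose proof (isO_kick_prim_rem _ isO_psi2).
  pose proof (isO_kick_prim_rem _ isO_psi3).
  (* Every summand is a product of a jet error, of order 3 or 2, with a factor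
     of order at least 1, or a remainder [kick_prim_rem] of order 4. *)
  apply (isO_ext 4 (fun x y =>
      - (psi3 x y - psi3_jet x y) * w3 x y
    - (- PI * (3 * x ^ 2 + 2 * x * y)) * (w3 x y - y)
    + (w1 x y - w1_jet x y) * (w1 x y + w1_jet x y) / 2 + (- PI * (x + y) ^ 2) ^ 2 / 2
    + (w2 x y - w2_jet x y) * (w2 x y + w2_jet x y) / 2
    + (2 * PI * (x + y) ^ 2 - PI * (2 * x + y) ^ 2) ^ 2 / 2
    - 3 / 2 * ((psi2 x y - psi2_jet x y) * (psi2 x y + psi2_jet x y) + (- PI * (x + y) ^ 2) ^ 2)
    - 3 / 2 * ((psi3 x y - psi3_jet x y) * (psi3 x y + psi3_jet x y)
               + (- PI * (3 * x ^ 2 + 2 * x * y)) ^ 2)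
    - PI / 3 * ((psi2 x y - (- 2 * x - y))
                * (psi2 x y ^ 2 + psi2 x y * (- 2 * x - y) + (- 2 * x - y) ^ 2))
    - PI / 3 * ((psi3 x y - x) * (psi3 x y ^ 2 + psi3 x y * x + x ^ 2))
    + kick_prim_rem (psi1 x y) + kick_prim_rem (psi2 x y) + kick_prim_rem (psi3 x y)
    - PI * x * (w3 x y - y) * (3 * x + w3 x y + y))).
  - intros x y; unfold action, G_cubic; rewrite !kick_prim_expand.
    unfold w1_jet, w2_jet, psi2_jet, psi3_jet, psi1; field.
  - assert (isO 1 w1_jet) by (unfold w1_jet; isO_auto).
    assert (isO 1 w2_jet) by (unfold w2_jet; isO_auto).
    assert (isO 1 psi2_jet) by (unfold psi2_jet; isO_auto).
    assert (isO 1 psi3_jet) by (unfold psi3_jet; isO_auto).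
    isO_auto.
Qed.

Definition is_diff2 (f : R -> R -> R) (x y A B : R) : Prop :=
  forall eps, 0 < eps -> exists d, 0 < d /\ forall h k, Rabs h < d -> Rabs k < d ->
    Rabs (f (x + h) (y + k) - f x y - A * h - B * k) <= eps * l1norm h k.

Lemma is_diff2_ext f g x y A B :
  (forall x y, f x y = g x y) -> is_diff2 f x y A B -> is_diff2 g x y A B.
Proof.
  intros E H eps He; destruct (H eps He) as [d [Hd H']]; exists d; split; auto.
  intros h k Hh Hk; rewrite <- !E; auto.
Qed.

Lemma is_diff2_coef f x y A B A' B' :
  A = A' -> B = B' -> is_diff2 f x y A B -> is_diff2 f x y A' B'.
Proof. intros -> ->; auto. Qed.

Lemma is_diff2_linear a b c x y : is_diff2 (fun x y => a * x + b * y + c) x y a b.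
Proof.
  intros eps He; exists 1; split; [lra|]; intros h k _ _.
  replace (a * (x + h) + b * (y + k) + c - (a * x + b * y + c) - a * h - b * k) with 0 by ring.
  rewrite Rabs_R0; apply Rmult_le_pos; [lra | apply l1norm_ge0].
Qed.

Lemma is_diff2_fst x y : is_diff2 (fun x y => x) x y 1 0.
Proof. apply (is_diff2_ext (fun x y => 1 * x + 0 * y + 0)), is_diff2_linear; intros; ring. Qed.

Lemma is_diff2_snd x y : is_diff2 (fun x y => y) x y 0 1.
Proof. apply (is_diff2_ext (fun x y => 0 * x + 1 * y + 0)), is_diff2_linear; intros; ring. Qed.

Lemma is_diff2_const c x y : is_diff2 (fun _ _ => c) x y 0 0.
Proof. apply (is_diff2_ext (fun x y => 0 * x + 0 * y + c)), is_diff2_linear; intros; ring. Qed.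

Lemma is_diff2_add f g x y A B C D :
  is_diff2 f x y A B -> is_diff2 g x y C D ->
  is_diff2 (fun x y => f x y + g x y) x y (A + C) (B + D).
Proof.
  intros Hf Hg eps He.
  destruct (Hf (eps / 2)) as [d1 [Hd1 H1]]; [lra|].
  destruct (Hg (eps / 2)) as [d2 [Hd2 H2]]; [lra|].
  exists (Rmin d1 d2); split; [apply Rmin_pos; auto|].
  intros h k Hh Hk; pose proof (Rmin_l d1 d2); pose proof (Rmin_r d1 d2).
  specialize (H1 h k ltac:(lra) ltac:(lra)); specialize (H2 h k ltac:(lra) ltac:(lra)).
  replace (f (x + h) (y + k) + g (x + h) (y + k) - (f x y + g x y) - (A + C) * h - (B + D) * k)
    with ((f (x + h) (y + k) - f x y - A * h - B * k)
          + (g (x + h) (y + k) - g x y - C * h - D * k)) by ring.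
  eapply Rle_trans; [apply Rabs_triang | lra].
Qed.

Lemma is_diff2_scal c f x y A B :
  is_diff2 f x y A B -> is_diff2 (fun x y => c * f x y) x y (c * A) (c * B).
Proof.
  intros Hf eps He; pose proof (Rabs_pos c) as Hc.
  destruct (Hf (eps / (Rabs c + 1))) as [d [Hd H]]; [apply Rdiv_lt_0_compat; lra|].
  exists d; split; auto; intros h k Hh Hk; specialize (H h k Hh Hk).
  replace (c * f (x + h) (y + k) - c * f x y - c * A * h - c * B * k)
    with (c * (f (x + h) (y + k) - f x y - A * h - B * k)) by ring.
  rewrite Rabs_mult; pose proof (l1norm_ge0 h k).
  pose proof (Rabs_pos (f (x + h) (y + k) - f x y - A * h - B * k)).
  apply Rle_trans with ((Rabs c + 1) * (eps / (Rabs c + 1) * l1norm h k)); [nra|].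
  right; field; lra.
Qed.

Lemma is_diff2_sub f g x y A B C D :
  is_diff2 f x y A B -> is_diff2 g x y C D ->
  is_diff2 (fun x y => f x y - g x y) x y (A - C) (B - D).
Proof.
  intros Hf Hg; apply (is_diff2_coef _ _ _ (A + (-1) * C) (B + (-1) * D)); try ring.
  apply (is_diff2_ext (fun x y => f x y + (-1) * g x y)); [intros; ring|].
  apply is_diff2_add, is_diff2_scal; auto.
Qed.

Lemma derivable_pt_lim_bound g u l : derivable_pt_lim g u l ->
  forall eps, 0 < eps -> exists d, 0 < d /\
    forall z, Rabs z < d -> Rabs (g (u + z) - g u - l * z) <= eps * Rabs z.
Proof.
  intros H eps He; destruct (H eps He) as [d Hd]; exists d; split; [apply cond_pos|].
  intros z Hz; destruct (Req_dec z 0) as [->|Hz0].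
  - rewrite Rplus_0_r; replace (g u - g u - l * 0) with 0 by ring; rewrite Rabs_R0; lra.
  - specialize (Hd z Hz0 Hz).
    replace (g (u + z) - g u - l * z) with (((g (u + z) - g u) / z - l) * z) by (field; auto).
    rewrite Rabs_mult; apply Rmult_le_compat_r; [apply Rabs_pos | lra].
Qed.

Lemma is_diff2_lipschitz f x y A B : is_diff2 f x y A B ->
  exists d, 0 < d /\ forall h k, Rabs h < d -> Rabs k < d ->
    Rabs (f (x + h) (y + k) - f x y) <= (Rabs A + Rabs B + 1) * l1norm h k.
Proof.
  intros Hf; destruct (Hf 1) as [d [Hd H]]; [lra|]; exists d; split; auto.
  intros h k Hh Hk; specialize (H h k Hh Hk); unfold l1norm in *.
  replace (f (x + h) (y + k) - f x y)
    with ((f (x + h) (y + k) - f x y - A * h - B * k) + (A * h + B * k)) by ring.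
  eapply Rle_trans; [apply Rabs_triang|].
  assert (Rabs (A * h + B * k) <= Rabs A * Rabs h + Rabs B * Rabs k).
  { eapply Rle_trans; [apply Rabs_triang|]; rewrite !Rabs_mult; lra. }
  pose proof (Rabs_pos A); pose proof (Rabs_pos B); pose proof (Rabs_pos h);
    pose proof (Rabs_pos k); nra.
Qed.

Lemma is_diff2_comp g g' f x y A B :
  derivable_pt_lim g (f x y) g' -> is_diff2 f x y A B ->
  is_diff2 (fun x y => g (f x y)) x y (g' * A) (g' * B).
Proof.
  intros Hg Hf eps He.
  set (M := Rabs A + Rabs B + 1); set (N := Rabs g' + 1).
  assert (HM : 1 <= M) by (unfold M; pose proof (Rabs_pos A); pose proof (Rabs_pos B); lra).
  assert (HN : 1 <= N) by (unfold N; pose proof (Rabs_pos g'); lra).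
  destruct (is_diff2_lipschitz f x y A B Hf) as [d1 [Hd1 H1]]; fold M in H1.
  destruct (derivable_pt_lim_bound g (f x y) g' Hg (eps / (2 * M))) as [dg [Hdg Hg']];
    [apply Rdiv_lt_0_compat; lra|].
  destruct (Hf (eps / (2 * N))) as [d2 [Hd2 H2]]; [apply Rdiv_lt_0_compat; lra|].
  exists (Rmin (Rmin d1 d2) (dg / (2 * M))); split.
  { repeat apply Rmin_pos; auto; apply Rdiv_lt_0_compat; lra. }
  intros h k Hh Hk.
  pose proof (Rmin_l (Rmin d1 d2) (dg / (2 * M))); pose proof (Rmin_r (Rmin d1 d2) (dg / (2 * M))).
  pose proof (Rmin_l d1 d2); pose proof (Rmin_r d1 d2).
  specialize (H1 h k ltac:(lra) ltac:(lra)); specialize (H2 h k ltac:(lra) ltac:(lra)).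
  set (r := f (x + h) (y + k) - f x y - A * h - B * k) in *.
  set (z := f (x + h) (y + k) - f x y) in *.
  assert (Hhk : M * l1norm h k < dg).
  { unfold l1norm; apply Rlt_le_trans with (M * (2 * (dg / (2 * M)))); [nra|].
    right; field; lra. }
  specialize (Hg' z ltac:(lra)); replace (f x y + z) with (f (x + h) (y + k)) in Hg'
    by (unfold z; ring).
  replace (g (f (x + h) (y + k)) - g (f x y) - g' * A * h - g' * B * k)
    with ((g (f (x + h) (y + k)) - g (f x y) - g' * z) + g' * r) by (unfold r, z; ring).
  eapply Rle_trans; [apply Rabs_triang|]; rewrite Rabs_mult.
  pose proof (l1norm_ge0 h k); pose proof (Rabs_pos g'); pose proof (Rabs_pos r).
  pose proof (Rabs_pos z).
  apply Rle_trans with (eps / (2 * M) * (M * l1norm h k) + N * (eps / (2 * N) * l1norm h k)).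
  - apply Rplus_le_compat.
    + eapply Rle_trans; [apply Hg'|]; apply Rmult_le_compat_l; [|lra].
      apply Rlt_le, Rdiv_lt_0_compat; lra.
    + apply Rle_trans with (N * Rabs r); [apply Rmult_le_compat_r; unfold N; lra|].
      apply Rmult_le_compat_l; lra.
  - right; field; lra.
Qed.

Lemma is_diff2_sq f x y A B : is_diff2 f x y A B ->
  is_diff2 (fun x y => f x y ^ 2) x y (2 * f x y * A) (2 * f x y * B).
Proof.
  intros H; apply (is_diff2_comp (fun t => t ^ 2) (2 * f x y) f x y A B); auto.
  replace (2 * f x y) with (INR 2 * f x y ^ Init.Nat.pred 2) by (simpl; ring).
  apply derivable_pt_lim_pow.
Qed.

(* The product is reduced to squares by polarization. *)
Lemma is_diff2_mul f g x y A B C D : is_diff2 f x y A B -> is_diff2 g x y C D ->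
  is_diff2 (fun x y => f x y * g x y) x y (f x y * C + g x y * A) (f x y * D + g x y * B).
Proof.
  intros Hf Hg.
  apply (is_diff2_ext (fun x y => / 4 * ((f x y + g x y) ^ 2 - (f x y - g x y) ^ 2)));
    [intros; field|].
  eapply is_diff2_coef; [ | | apply is_diff2_scal; apply is_diff2_sub; apply is_diff2_sq;
    [apply is_diff2_add; eauto | apply is_diff2_sub; eauto]]; cbv beta; field.
Qed.

Lemma is_diff2_partial_x f x y A B : is_diff2 f x y A B -> derivable_pt_lim (fun t => f t y) x A.
Proof.
  intros H eps He; destruct (H (eps / 2)) as [d [Hd H']]; [lra|].
  exists (mkposreal d Hd); intros h Hh0 Hh; simpl in Hh.
  specialize (H' h 0 Hh ltac:(rewrite Rabs_R0; lra)); unfold l1norm in H'.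
  rewrite Rplus_0_r, Rabs_R0, Rplus_0_r in H'.
  replace ((f (x + h) y - f x y) / h - A) with ((f (x + h) y - f x y - A * h - B * 0) / h)
    by (field; auto).
  unfold Rdiv; rewrite Rabs_mult, Rabs_inv; pose proof (Rabs_pos_lt h Hh0).
  apply Rle_lt_trans with (eps / 2 * Rabs h * / Rabs h).
  - apply Rmult_le_compat_r; [left; apply Rinv_0_lt_compat|]; auto.
  - replace (eps / 2 * Rabs h * / Rabs h) with (eps / 2) by (field; lra); lra.
Qed.

Lemma is_diff2_partial_y f x y A B : is_diff2 f x y A B -> derivable_pt_lim (fun t => f x t) y B.
Proof.
  intros Hf; apply (is_diff2_partial_x (fun u v => f v u) y x B A).
  intros eps He; destruct (Hf eps He) as [d [Hd Hb]]; exists d; split; auto.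
  intros h k Hh Hk; specialize (Hb k h Hk Hh); unfold l1norm in *; cbv beta.
  replace (f (x + k) (y + h) - f x y - B * h - A * k)
    with (f (x + k) (y + h) - f x y - A * k - B * h) by ring.
  lra.
Qed.

Lemma is_diff2_continuous_x f x y A B : is_diff2 f x y A B ->
  forall e, 0 < e -> exists d, 0 < d /\ forall h, Rabs h < d -> Rabs (f (x + h) y - f x y) < e.
Proof.
  intros Hf e He; destruct (is_diff2_lipschitz f x y A B Hf) as [d0 [Hd0 Hl]].
  set (M := Rabs A + Rabs B + 1).
  assert (HM : 1 <= M) by (unfold M; pose proof (Rabs_pos A); pose proof (Rabs_pos B); lra).
  exists (Rmin d0 (e / M)); split; [apply Rmin_pos; [|apply Rdiv_lt_0_compat]; lra|].
  intros h Hh; pose proof (Rmin_l d0 (e / M)); pose proof (Rmin_r d0 (e / M)).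
  specialize (Hl h 0 ltac:(lra) ltac:(rewrite Rabs_R0; lra)); fold M in Hl.
  rewrite Rplus_0_r in Hl; unfold l1norm in Hl; rewrite Rabs_R0, Rplus_0_r in Hl.
  eapply Rle_lt_trans; [apply Hl|].
  apply Rlt_le_trans with (M * (e / M)); [apply Rmult_lt_compat_l; lra | right; field; lra].
Qed.

Lemma derivable_pt_lim_kick t : derivable_pt_lim kick t (kick_deriv t).
Proof.
  unfold kick, kick_deriv.
  replace (- 2 * PI * sin t - 3 * cos t) with (2 * PI * (- sin t - 0) - 3 * cos t) by ring.
  apply (derivable_pt_lim_minus (fun t => 2 * PI * (cos t - 1)) (fun t => 3 * sin t)).
  - apply (derivable_pt_lim_scal (fun t => cos t - 1)), (derivable_pt_lim_minus cos (fun _ => 1)).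
    + apply derivable_pt_lim_cos.
    + apply derivable_pt_lim_const.
  - apply derivable_pt_lim_scal, derivable_pt_lim_sin.
Qed.

Lemma derivable_pt_lim_kick_prim t : derivable_pt_lim kick_prim t (kick t).
Proof.
  unfold kick_prim, kick.
  replace (2 * PI * (cos t - 1) - 3 * sin t) with (2 * PI * (cos t - 1) + 3 * (- sin t - 0)) by ring.
  apply (derivable_pt_lim_plus (fun t => 2 * PI * (sin t - t)) (fun t => 3 * (cos t - 1))).
  - apply (derivable_pt_lim_scal (fun t => sin t - t)), (derivable_pt_lim_minus sin id).
    + apply derivable_pt_lim_sin.
    + apply derivable_pt_lim_id.
  - apply (derivable_pt_lim_scal (fun t => cos t - 1)), (derivable_pt_lim_minus cos (fun _ => 1)).
    + apply derivable_pt_lim_cos.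
    + apply derivable_pt_lim_const.
Qed.

(* Derivatives of the iterates at (x, y) in the direction (a, b). *)
Definition d_psi1 (x y a b : R) := a + b.
Definition d_w1 (x y a b : R) := b + kick_deriv (psi1 x y) * d_psi1 x y a b.
Definition d_psi2 (x y a b : R) := d_psi1 x y a b + d_w1 x y a b.
Definition d_w2 (x y a b : R) := d_w1 x y a b + kick_deriv (psi2 x y) * d_psi2 x y a b.
Definition d_psi3 (x y a b : R) := d_psi2 x y a b + d_w2 x y a b.
Definition d_w3 (x y a b : R) := d_w2 x y a b + kick_deriv (psi3 x y) * d_psi3 x y a b.

Lemma is_diff2_kick P x y A B : is_diff2 P x y A B ->
  is_diff2 (fun x y => kick (P x y)) x y (kick_deriv (P x y) * A) (kick_deriv (P x y) * B).
Proof. intros H; apply is_diff2_comp; [apply derivable_pt_lim_kick | auto]. Qed.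

Lemma is_diff2_kick_prim P x y A B : is_diff2 P x y A B ->
  is_diff2 (fun x y => kick_prim (P x y)) x y (kick (P x y) * A) (kick (P x y) * B).
Proof. intros H; apply is_diff2_comp; [apply derivable_pt_lim_kick_prim | auto]. Qed.

Lemma is_diff2_psi1 x y : is_diff2 psi1 x y (d_psi1 x y 1 0) (d_psi1 x y 0 1).
Proof. apply is_diff2_add; [apply is_diff2_fst | apply is_diff2_snd]. Qed.

Lemma is_diff2_w1 x y : is_diff2 w1 x y (d_w1 x y 1 0) (d_w1 x y 0 1).
Proof. apply is_diff2_add; [apply is_diff2_snd | apply is_diff2_kick, is_diff2_psi1]. Qed.

Lemma is_diff2_psi2 x y : is_diff2 psi2 x y (d_psi2 x y 1 0) (d_psi2 x y 0 1).
Proof. apply is_diff2_add; [apply is_diff2_psi1 | apply is_diff2_w1]. Qed.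

Lemma is_diff2_w2 x y : is_diff2 w2 x y (d_w2 x y 1 0) (d_w2 x y 0 1).
Proof. apply is_diff2_add; [apply is_diff2_w1 | apply is_diff2_kick, is_diff2_psi2]. Qed.

Lemma is_diff2_psi3 x y : is_diff2 psi3 x y (d_psi3 x y 1 0) (d_psi3 x y 0 1).
Proof. apply is_diff2_add; [apply is_diff2_psi2 | apply is_diff2_w2]. Qed.

Lemma is_diff2_w3 x y : is_diff2 w3 x y (d_w3 x y 1 0) (d_w3 x y 0 1).
Proof. apply is_diff2_add; [apply is_diff2_w2 | apply is_diff2_kick, is_diff2_psi3]. Qed.

(* The intermediate variables drop out of the derivatives of [action]: this
   is why it generates the third iterate. *)
Lemma is_diff2_action x y :
  is_diff2 action x y (w3 x y - y + (x - psi3 x y) * d_w3 x y 1 0)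
                      ((x - psi3 x y) * d_w3 x y 0 1).
Proof.
  apply (is_diff2_ext (fun x y => (x - psi3 x y) * w3 x y + (/ 2 * y ^ 2 + kick_prim (psi1 x y))
     + (/ 2 * w1 x y ^ 2 + kick_prim (psi2 x y)) + (/ 2 * w2 x y ^ 2 + kick_prim (psi3 x y))));
    [intros; unfold action; field|].
  eapply is_diff2_coef; [ | |
    apply is_diff2_add; [apply is_diff2_add; [apply is_diff2_add; [
        apply is_diff2_mul; [apply is_diff2_sub; [apply is_diff2_fst | apply is_diff2_psi3]
                            | apply is_diff2_w3]
      | apply is_diff2_add; [apply is_diff2_scal, is_diff2_sq, is_diff2_snd
                            | apply is_diff2_kick_prim, is_diff2_psi1]]
      | apply is_diff2_add; [apply is_diff2_scal, is_diff2_sq, is_diff2_w1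
                            | apply is_diff2_kick_prim, is_diff2_psi2]]
      | apply is_diff2_add; [apply is_diff2_scal, is_diff2_sq, is_diff2_w2
                            | apply is_diff2_kick_prim, is_diff2_psi3]] ];
  cbv beta; unfold d_psi3, d_psi2, d_psi1, w3, w2, w1; field.
Qed.

Lemma isO_d_w3_snd : isO 1 (fun x y => d_w3 x y 0 1 - 1).
Proof.
  pose proof (isO_kick_deriv_rem _ isO_psi1); pose proof (isO_kick_deriv_rem _ isO_psi2).
  pose proof (isO_kick_deriv_rem _ isO_psi3).
  apply (isO_ext 1 (fun x y => kick_deriv_rem (psi1 x y) + 2 * kick_deriv_rem (psi2 x y)
     - 2 * (kick_deriv_rem (psi1 x y) * kick_deriv_rem (psi2 x y))
     - kick_deriv_rem (psi1 x y) * kick_deriv_rem (psi3 x y)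
     - kick_deriv_rem (psi2 x y) * kick_deriv_rem (psi3 x y)
     + kick_deriv_rem (psi1 x y) * kick_deriv_rem (psi2 x y) * kick_deriv_rem (psi3 x y))).
  - intros x y; unfold d_w3, d_psi3, d_w2, d_psi2, d_w1, d_psi1; rewrite !kick_deriv_expand; ring.
  - isO_auto.
Qed.

Lemma Rmult_le_small C r e : 0 <= C -> 0 <= r -> r <= e / (C + 1) -> C * r <= e.
Proof.
  intros HC Hr Hre; apply Rle_trans with ((C + 1) * r); [lra|].
  apply Rle_trans with ((C + 1) * (e / (C + 1))); [apply Rmult_le_compat_l; lra|].
  right; field; lra.
Qed.

Definition inverse_radius (r : R) : Prop :=
  0 < r /\ r <= 1 / 4 /\
  (forall x y, Rabs x < r -> Rabs y < r -> 1 / 2 <= d_w3 x y 0 1) /\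
  (forall x y, Rabs x < r -> Rabs y < r -> Rabs (w3 x y - y) <= / 4 * l1norm x y).

Lemma inverse_radius_exists : exists r, inverse_radius r.
Proof.
  destruct isO_d_w3_snd as [C1 [HC1 B1]]; destruct isO_w3_lin as [C2 [HC2 B2]].
  set (r := Rmin (1 / 4) (Rmin (/ 4 / (C1 + 1)) (/ 8 / (C2 + 1)))).
  assert (Hr1 : r <= 1 / 4) by apply Rmin_l.
  assert (Hr2 : r <= / 4 / (C1 + 1)) by (eapply Rle_trans; [apply Rmin_r | apply Rmin_l]).
  assert (Hr3 : r <= / 8 / (C2 + 1)) by (eapply Rle_trans; [apply Rmin_r | apply Rmin_r]).
  assert (Hr0 : 0 < r) by (repeat apply Rmin_pos; try lra; apply Rdiv_lt_0_compat; lra).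
  exists r; split; [|split; [|split]]; auto; intros x y Hx Hy.
  all: assert (Hs : l1norm x y <= 2 * r) by (unfold l1norm; lra).
  all: pose proof (l1norm_ge0 x y).
  - specialize (B1 x y ltac:(lra)); rewrite pow_1 in B1; apply Rabs_le_inv in B1.
    assert (C1 * (2 * r) <= / 2) by (apply Rmult_le_small; lra). nra.
  - eapply Rle_trans; [apply B2; lra|].
    assert (C2 * (2 * r) <= / 4) by (apply Rmult_le_small; lra).
    replace (C2 * l1norm x y ^ 2) with ((C2 * l1norm x y) * l1norm x y) by ring.
    apply Rmult_le_compat_r; nra.
Qed.

Section LocalInverse.

Variable r : R.
Hypothesis Hr : inverse_radius r.

Lemma w3_increasing x u1 u2 : Rabs x < r -> - r < u1 -> u1 < u2 -> u2 < r ->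
  (u2 - u1) / 2 <= w3 x u2 - w3 x u1.
Proof.
  destruct Hr as [_ [_ [Hslope _]]]; intros Hx H1 H12 H2.
  destruct (MVT_cor2 (fun t => w3 x t) (fun t => d_w3 x t 0 1) u1 u2 H12) as [c [Hc Hcu]].
  { intros c _; apply (is_diff2_partial_y w3 x c (d_w3 x c 1 0)), is_diff2_w3. }
  rewrite Hc; assert (1 / 2 <= d_w3 x c 0 1) by (apply Hslope; auto; apply Rabs_def1; lra).
  nra.
Qed.

Lemma w3_injective x u u' : Rabs x < r -> Rabs u < r -> Rabs u' < r ->
  w3 x u = w3 x u' -> u = u'.
Proof.
  intros Hx Hu Hu' E; apply Rabs_def2 in Hu; apply Rabs_def2 in Hu'.
  destruct (Rtotal_order u u') as [Hlt|[Heq|Hgt]]; auto.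
  - pose proof (w3_increasing x u u' Hx ltac:(lra) Hlt ltac:(lra)); lra.
  - pose proof (w3_increasing x u' u Hx ltac:(lra) Hgt ltac:(lra)); lra.
Qed.

(* The local inverse of [w3 x]; its value outside the range is irrelevant. *)
Definition w3_inv (x W : R) : R :=
  epsilon (inhabits 0) (fun w => Rabs w < r /\ w3 x w = W).

Lemma w3_inv_w3 x u : Rabs x < r -> Rabs u < r -> w3_inv x (w3 x u) = u.
Proof.
  intros Hx Hu; unfold w3_inv.
  destruct (epsilon_spec (inhabits 0) (fun w => Rabs w < r /\ w3 x w = w3 x u)) as [H1 H2];
    [exists u; auto|].
  apply (w3_injective x); auto.
Qed.

Lemma w3_inv_between x a b W : Rabs x < r -> - r < a -> a < b -> b < r ->
  w3 x a < W -> W < w3 x b -> a <= w3_inv x W <= b /\ w3 x (w3_inv x W) = W.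
Proof.
  intros Hx Ha Hab Hb HWa HWb.
  assert (Hcont : continuity (fun t => w3 x t - W)).
  { intros t; apply derivable_continuous_pt; exists (d_w3 x t 0 1 - 0).
    apply (is_diff2_partial_y (fun x y => w3 x y - W) x t (d_w3 x t 1 0 - 0)).
    apply is_diff2_sub; [apply is_diff2_w3 | apply is_diff2_const]. }
  destruct (IVT (fun t => w3 x t - W) a b Hcont Hab ltac:(lra) ltac:(lra)) as [u [Hu Hu']].
  assert (Rabs u < r) by (apply Rabs_def1; lra).
  replace W with (w3 x u) by lra; rewrite w3_inv_w3; auto.
Qed.


Lemma w3_bracket x0 w0 e : Rabs x0 < r / 2 -> Rabs w0 < r / 2 -> 0 < e -> e <= r / 4 ->
  exists d, 0 < d /\ forall h m, Rabs h < d -> Rabs m < d ->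
    Rabs (x0 + h) < r /\
    w3 (x0 + h) (w0 - e) < w3 x0 w0 + m < w3 (x0 + h) (w0 + e).
Proof.
  pose proof Hr as [Hr0 _]; intros Hx0 Hw0 He Her.
  apply Rabs_def2 in Hx0; apply Rabs_def2 in Hw0.
  assert (Hx0r : Rabs x0 < r) by (apply Rabs_def1; lra).
  pose proof (w3_increasing x0 w0 (w0 + e) Hx0r ltac:(lra) ltac:(lra) ltac:(lra)).
  pose proof (w3_increasing x0 (w0 - e) w0 Hx0r ltac:(lra) ltac:(lra) ltac:(lra)).
  destruct (is_diff2_continuous_x _ _ _ _ _ (is_diff2_w3 x0 (w0 + e)) (e / 4)) as [dp [Hdp Cp]];
    [lra|].
  destruct (is_diff2_continuous_x _ _ _ _ _ (is_diff2_w3 x0 (w0 - e)) (e / 4)) as [dm [Hdm Cm]];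
    [lra|].
  exists (Rmin (Rmin dp dm) (e / 4)); split; [repeat apply Rmin_pos; lra|].
  intros h m Hh Hm.
  pose proof (Rmin_l (Rmin dp dm) (e / 4)); pose proof (Rmin_r (Rmin dp dm) (e / 4)).
  pose proof (Rmin_l dp dm); pose proof (Rmin_r dp dm).
  specialize (Cp h ltac:(lra)); specialize (Cm h ltac:(lra)).
  apply Rabs_def2 in Cp; apply Rabs_def2 in Cm; apply Rabs_def2 in Hh; apply Rabs_def2 in Hm.
  split; [apply Rabs_def1; lra | lra].
Qed.

Lemma w3_inv_near x0 w0 : Rabs x0 < r / 2 -> Rabs w0 < r / 2 ->
  forall e, 0 < e -> exists d, 0 < d /\ forall h m, Rabs h < d -> Rabs m < d ->
    Rabs (w3_inv (x0 + h) (w3 x0 w0 + m) - w0) < e /\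
    w3 (x0 + h) (w3_inv (x0 + h) (w3 x0 w0 + m)) = w3 x0 w0 + m.
Proof.
  pose proof Hr as [Hr0 _]; intros Hx0 Hw0 e He.
  set (e' := Rmin e (r / 4) / 2).
  assert (He' : 0 < e') by (unfold e'; pose proof (Rmin_pos e (r / 4) He ltac:(lra)); lra).
  assert (He'e : e' < e) by (unfold e'; pose proof (Rmin_l e (r / 4)); lra).
  assert (He'r : e' <= r / 4) by (unfold e'; pose proof (Rmin_r e (r / 4)); lra).
  destruct (w3_bracket x0 w0 e' Hx0 Hw0 He' He'r) as [d [Hd Hb]].
  exists d; split; auto; intros h m Hh Hm; destruct (Hb h m Hh Hm) as [Hxh [HS1 HS2]].
  apply Rabs_def2 in Hw0.
  destruct (w3_inv_between (x0 + h) (w0 - e') (w0 + e') (w3 x0 w0 + m) Hxh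
    ltac:(lra) ltac:(lra) ltac:(lra) HS1 HS2) as [Hbetween Hinv].
  split; auto; apply Rabs_def1; lra.
Qed.

End LocalInverse.

Lemma implicit_increment_bound A B eta h k m :
  0 <= eta -> 2 * eta <= Rabs B -> Rabs (m - A * h - B * k) <= eta * l1norm h k ->
  Rabs B * l1norm h k <= (2 * Rabs A + 2 * Rabs B + 2) * l1norm h m.
Proof.
  intros Heta HB Hlin; unfold l1norm in *.
  assert (Rabs (B * k) <= Rabs m + Rabs A * Rabs h + eta * (Rabs h + Rabs k)).
  { replace (B * k) with (m + - (A * h) + - (m - A * h - B * k)) by ring.
    eapply Rle_trans; [apply Rabs_triang|]; rewrite Rabs_Ropp.
    eapply Rle_trans; [apply Rplus_le_compat_r, Rabs_triang|].
    rewrite Rabs_Ropp, Rabs_mult; lra. }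
  rewrite Rabs_mult in H.
  pose proof (Rabs_pos h); pose proof (Rabs_pos k); pose proof (Rabs_pos m);
    pose proof (Rabs_pos A).
  assert (eta * (Rabs h + Rabs k) <= Rabs B / 2 * (Rabs h + Rabs k))
    by (apply Rmult_le_compat_r; lra).
  nra.
Qed.

Lemma implicit_increment_error P Q A B eta h k m dPhi :
  B <> 0 -> 0 <= eta -> 2 * eta <= Rabs B ->
  Rabs (m - A * h - B * k) <= eta * l1norm h k ->
  Rabs (dPhi - P * h - Q * k) <= eta * l1norm h k ->
  Rabs (dPhi - (P - Q * A / B) * h - Q / B * m)
    <= eta * ((1 + Rabs (Q / B)) * ((2 * Rabs A + 2 * Rabs B + 2) / Rabs B)) * l1norm h m.
Proof.
  intros HB Heta HetaB Hg HPhi.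
  assert (Hb : 0 < Rabs B) by (apply Rabs_pos_lt; auto).
  set (L := (2 * Rabs A + 2 * Rabs B + 2) / Rabs B).
  assert (Hhk : l1norm h k <= L * l1norm h m).
  { unfold L; apply (Rmult_le_reg_l (Rabs B)); auto.
    replace (Rabs B * ((2 * Rabs A + 2 * Rabs B + 2) / Rabs B * l1norm h m))
      with ((2 * Rabs A + 2 * Rabs B + 2) * l1norm h m) by (field; lra).
    apply (implicit_increment_bound A B eta); auto. }
  replace (dPhi - (P - Q * A / B) * h - Q / B * m)
    with ((dPhi - P * h - Q * k) + - (Q / B) * (m - A * h - B * k)) by (field; auto).
  eapply Rle_trans; [apply Rabs_triang|]; rewrite Rabs_mult, Rabs_Ropp.
  pose proof (l1norm_ge0 h k); pose proof (Rabs_pos (Q / B)).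
  apply Rle_trans with (eta * (1 + Rabs (Q / B)) * l1norm h k); [nra|].
  rewrite <- Rmult_assoc, (Rmult_assoc (eta * (1 + Rabs (Q / B)))).
  apply Rmult_le_compat_l; [nra | auto].
Qed.

Lemma is_diff2_implicit (Phi g om : R -> R -> R) x0 w0 P Q A B :
  B <> 0 -> is_diff2 Phi x0 w0 P Q -> is_diff2 g x0 w0 A B ->
  om x0 (g x0 w0) = w0 ->
  (forall e, 0 < e -> exists d, 0 < d /\ forall h m, Rabs h < d -> Rabs m < d ->
     Rabs (om (x0 + h) (g x0 w0 + m) - w0) < e /\
     g (x0 + h) (om (x0 + h) (g x0 w0 + m)) = g x0 w0 + m) ->
  is_diff2 (fun x W => Phi x (om x W)) x0 (g x0 w0) (P - Q * A / B) (Q / B).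
Proof.
  intros HB HPhi Hg Hom0 Hom eps He.
  assert (Hb : 0 < Rabs B) by (apply Rabs_pos_lt; auto).
  set (KL := (1 + Rabs (Q / B)) * ((2 * Rabs A + 2 * Rabs B + 2) / Rabs B)).
  assert (HKL : 0 < KL).
  { unfold KL; pose proof (Rabs_pos (Q / B)); pose proof (Rabs_pos A).
    apply Rmult_lt_0_compat; [lra | apply Rdiv_lt_0_compat; lra]. }
  set (eta := Rmin (Rabs B / 2) (eps / KL)).
  assert (Heta : 0 < eta) by (apply Rmin_pos; [lra | apply Rdiv_lt_0_compat; lra]).
  assert (HetaB : 2 * eta <= Rabs B) by (unfold eta; pose proof (Rmin_l (Rabs B / 2) (eps / KL)); lra).
  assert (HetaKL : eta * KL <= eps).
  { apply Rle_trans with (eps / KL * KL); [|right; field; lra].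
    apply Rmult_le_compat_r; [lra | apply Rmin_r]. }
  destruct (Hg eta Heta) as [da [Hda Ha]]; destruct (HPhi eta Heta) as [dp [Hdp Hp]].
  destruct (Hom (Rmin da dp) ltac:(apply Rmin_pos; auto)) as [d1 [Hd1 Hc]].
  exists (Rmin d1 (Rmin da dp)); split; [repeat apply Rmin_pos; auto|].
  intros h m Hh Hm.
  pose proof (Rmin_l d1 (Rmin da dp)); pose proof (Rmin_r d1 (Rmin da dp)).
  pose proof (Rmin_l da dp); pose proof (Rmin_r da dp).
  destruct (Hc h m ltac:(lra) ltac:(lra)) as [Hk Hsol].
  set (k := om (x0 + h) (g x0 w0 + m) - w0) in Hk.
  replace (om (x0 + h) (g x0 w0 + m)) with (w0 + k) in * by (unfold k; ring).
  rewrite Hom0.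
  specialize (Ha h k ltac:(lra) ltac:(lra)); specialize (Hp h k ltac:(lra) ltac:(lra)).
  rewrite Hsol in Ha.
  replace (g x0 w0 + m - g x0 w0 - A * h - B * k) with (m - A * h - B * k) in Ha by ring.
  eapply Rle_trans; [apply (implicit_increment_error P Q A B eta h k m); auto; lra|].
  apply Rmult_le_compat_r; [apply l1norm_ge0 | auto].
Qed.

Definition gen_fun (r W x : R) : R := action x (w3_inv r x W).

Lemma is_diff2_gen_fun r x0 w0 : inverse_radius r -> Rabs x0 < r / 2 -> Rabs w0 < r / 2 ->
  is_diff2 (fun x W => gen_fun r W x) x0 (w3 x0 w0) (w3 x0 w0 - w0) (x0 - psi3 x0 w0).
Proof.
  intros Hr Hx0 Hw0; pose proof Hr as [Hr0 [_ [Hslope _]]].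
  assert (HB : 1 / 2 <= d_w3 x0 w0 0 1) by (apply Hslope; lra).
  eapply is_diff2_coef;
    [ | | apply (is_diff2_implicit action w3 (w3_inv r) x0 w0 _ _ _ (d_w3 x0 w0 0 1) ltac:(lra)
                   (is_diff2_action x0 w0) (is_diff2_w3 x0 w0)) ].
  - field; lra.
  - field; lra.
  - apply w3_inv_w3; auto; lra.
  - apply w3_inv_near; auto.
Qed.

Lemma w3_inv_small r x W : inverse_radius r -> Rabs x < r / 8 -> Rabs W < r / 8 ->
  Rabs (w3_inv r x W) < r /\ w3 x (w3_inv r x W) = W /\
  l1norm x (w3_inv r x W) <= 2 * (Rabs x + Rabs W).
Proof.
  intros Hr Hx HW; pose proof Hr as [Hr0 [_ [_ Hmove]]].
  apply Rabs_def2 in Hx as Hx'; apply Rabs_def2 in HW as HW'.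
  assert (Hxr : Rabs x < r) by lra.
  pose proof (Hmove x (r / 2) Hxr ltac:(rewrite Rabs_right; lra)) as Hup.
  pose proof (Hmove x (- (r / 2)) Hxr ltac:(rewrite Rabs_Ropp, Rabs_right; lra)) as Hdown.
  unfold l1norm in Hup, Hdown; rewrite Rabs_Ropp in Hdown.
  rewrite (Rabs_right (r / 2)) in Hup, Hdown by lra.
  apply Rabs_le_inv in Hup; apply Rabs_le_inv in Hdown; pose proof (Rabs_pos x).
  destruct (w3_inv_between r Hr x (- (r / 2)) (r / 2) W Hxr ltac:(lra) ltac:(lra) ltac:(lra)
    ltac:(lra) ltac:(lra)) as [Hbetween Hsol].
  set (w := w3_inv r x W) in *.
  assert (Hw : Rabs w < r) by (apply Rabs_def1; lra).
  split; auto; split; auto.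
  pose proof (Hmove x w Hxr Hw) as Hmw; rewrite Hsol in Hmw; unfold l1norm in *.
  assert (Rabs w <= Rabs W + Rabs (W - w)).
  { replace w with (W + - (W - w)) at 1 by ring.
    eapply Rle_trans; [apply Rabs_triang|]; rewrite Rabs_Ropp; lra. }
  pose proof (Rabs_pos W); lra.
Qed.

Lemma gen_fun_sub_cubic r : inverse_radius r -> exists C, 0 <= C /\
  forall x W, Rabs x < r / 8 -> Rabs W < r / 8 ->
    Rabs (gen_fun r W x - G_cubic x W) <= C * (Rabs x + Rabs W) ^ 4.
Proof.
  intros Hr; pose proof Hr as [Hr0 [Hr1 _]]; destruct isO_action as [C [HC B]].
  exists (16 * C); split; [lra|]; intros x W Hx HW.
  destruct (w3_inv_small r x W Hr Hx HW) as [Hw [Hsol Hs]].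
  unfold gen_fun; set (w := w3_inv r x W) in *.
  replace (G_cubic x W) with (G_cubic x (w3 x w)) by (rewrite Hsol; reflexivity).
  eapply Rle_trans; [apply B; lra|].
  replace (16 * C * (Rabs x + Rabs W) ^ 4) with (C * (2 * (Rabs x + Rabs W)) ^ 4) by ring.
  apply Rmult_le_compat_l; auto; apply pow_incr; split; [apply l1norm_ge0 | auto].
Qed.

Lemma isO_G_cubic : isO 3 (fun W x => G_cubic x W).
Proof. unfold G_cubic; isO_auto. Qed.

Lemma gen_fun_bigO3 r : inverse_radius r -> bigO 3 (gen_fun r).
Proof.
  intros Hr; pose proof Hr as [Hr0 [Hr1 _]].
  destruct (gen_fun_sub_cubic r Hr) as [C4 [HC4 B4]]; destruct isO_G_cubic as [C3 [HC3 B3]].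
  exists (C4 + C3), (r / 8); split; [lra|]; intros W x HW Hx.
  specialize (B4 x W Hx HW); specialize (B3 W x ltac:(unfold l1norm; lra)).
  unfold l1norm in B3; rewrite (Rplus_comm (Rabs x) (Rabs W)) in B4.
  replace (gen_fun r W x) with ((gen_fun r W x - G_cubic x W) + G_cubic x W) by ring.
  eapply Rle_trans; [apply Rabs_triang|].
  assert ((Rabs W + Rabs x) ^ 4 <= (Rabs W + Rabs x) ^ 3)
    by (apply pow_le1_antimono; [pose proof (Rabs_pos x); pose proof (Rabs_pos W)| |]; lra || lia).
  assert (C4 * (Rabs W + Rabs x) ^ 4 <= C4 * (Rabs W + Rabs x) ^ 3)
    by (apply Rmult_le_compat_l; auto).
  lra.
Qed.

Lemma no_strict_extremum_of_cubic (G : R -> R -> R) a C rho :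
  0 < a -> 0 <= C -> 0 < rho ->
  (forall t, Rabs t < rho -> Rabs (G 0 t - a * t ^ 3) <= C * t ^ 4) ->
  ~ strict_local_min0 G /\ ~ strict_local_max0 G.
Proof.
  intros Ha HC Hrho Hcub.
  assert (G00 : G 0 0 = 0).
  { specialize (Hcub 0 ltac:(rewrite Rabs_R0; lra)).
    replace (a * 0 ^ 3) with 0 in Hcub by ring; replace (C * 0 ^ 4) with 0 in Hcub by ring.
    rewrite Rminus_0_r in Hcub; apply Rabs_le_inv in Hcub; lra. }
  assert (Hsign : forall r, 0 < r -> exists tau, 0 < tau < r /\ 0 < G 0 tau /\ G 0 (- tau) < 0).
  { intros r Hr.
    set (tau := Rmin (Rmin r rho) (a / 2 / (C + 1)) / 2).
    assert (Hm : 0 < Rmin (Rmin r rho) (a / 2 / (C + 1)))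
      by (repeat apply Rmin_pos; try apply Rdiv_lt_0_compat; lra).
    pose proof (Rmin_l (Rmin r rho) (a / 2 / (C + 1))); pose proof (Rmin_l r rho).
    pose proof (Rmin_r r rho); pose proof (Rmin_r (Rmin r rho) (a / 2 / (C + 1))).
    assert (Ht : 0 < tau) by (unfold tau; lra).
    assert (HCt : C * tau <= a / 2) by (apply Rmult_le_small; unfold tau; lra).
    assert (Ht3 : 0 < tau ^ 3) by (apply pow_lt; lra).
    assert (HCt4 : C * tau ^ 4 <= a / 2 * tau ^ 3).
    { replace (C * tau ^ 4) with ((C * tau) * tau ^ 3) by ring; apply Rmult_le_compat_r; lra. }
    exists tau; split; [unfold tau; lra|].
    pose proof (Hcub tau ltac:(rewrite Rabs_right; unfold tau; lra)) as Hp.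
    pose proof (Hcub (- tau) ltac:(rewrite Rabs_Ropp, Rabs_right; unfold tau; lra)) as Hn.
    replace ((- tau) ^ 3) with (- tau ^ 3) in Hn by ring.
    replace ((- tau) ^ 4) with (tau ^ 4) in Hn by ring.
    apply Rabs_le_inv in Hp; apply Rabs_le_inv in Hn; nra. }
  split; intros [r [Hr Hext]]; destruct (Hsign r Hr) as [tau [Htau [Hpos Hneg]]].
  - specialize (Hext 0 (- tau) ltac:(rewrite Rabs_R0; lra)
      ltac:(rewrite Rabs_Ropp, Rabs_right; lra) ltac:(intros E; inversion E; lra)); lra.
  - specialize (Hext 0 tau ltac:(rewrite Rabs_R0; lra)
      ltac:(rewrite Rabs_right; lra) ltac:(intros E; inversion E; lra)); lra.
Qed.

Lemma gen_fun_no_strict_extremum r : inverse_radius r ->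
  ~ strict_local_min0 (gen_fun r) /\ ~ strict_local_max0 (gen_fun r).
Proof.
  intros Hr; pose proof Hr as [Hr0 _]; pose proof PI_bounds.
  destruct (gen_fun_sub_cubic r Hr) as [C [HC B]].
  apply (no_strict_extremum_of_cubic _ (2 * PI) C (r / 8)); [lra | auto | lra|].
  intros t Ht; specialize (B t 0 Ht ltac:(rewrite Rabs_R0; lra)).
  replace (G_cubic t 0) with (2 * PI * t ^ 3) in B by (unfold G_cubic; ring).
  replace (Rabs t + Rabs 0) with (Rabs t) in B by (rewrite Rabs_R0; ring).
  rewrite Rabs_pow_even; exact B.
Qed.

Lemma jet_cone_step psi w P W : 0 < w <= 1 / 10 -> Rabs psi <= w / 10 ->
  Rabs (P - psi3_jet psi w) <= w ^ 2 / 5 -> Rabs (W - w3_jet psi w) <= w ^ 2 / 5 ->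
  w + 2 / 5 * w ^ 2 <= W /\ Rabs P <= W / 10.
Proof.
  intros Hw Hpsi HP HW; pose proof PI_bounds.
  apply Rabs_le_inv in HP; apply Rabs_le_inv in HW; apply Rabs_le_inv in Hpsi as Hpsi'.
  unfold psi3_jet, w3_jet in *; assert (Hw2 : 0 <= w ^ 2) by (apply pow_le; lra).
  assert (Hq : 3 / 5 * w ^ 2 <= PI * (6 * psi ^ 2 + 6 * psi * w + w ^ 2)).
  { assert (4 / 10 * w ^ 2 <= 6 * psi ^ 2 + 6 * psi * w + w ^ 2) by (simpl; nra); nra. }
  split; [lra|].
  assert (Hfac0 : 0 <= 1 - 3 * PI * psi - 2 * PI * w) by nra.
  assert (Hfac1 : 1 - 3 * PI * psi - 2 * PI * w <= 1 - 34 / 10 * w) by nra.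
  assert (Rabs psi * (1 - 3 * PI * psi - 2 * PI * w) <= w / 10 * (1 - 34 / 10 * w)).
  { apply Rle_trans with (w / 10 * (1 - 3 * PI * psi - 2 * PI * w));
      apply Rmult_le_compat; try lra; apply Rabs_pos. }
  replace P with (psi * (1 - 3 * PI * psi - 2 * PI * w)
                  + (P - (psi - PI * (3 * psi ^ 2 + 2 * psi * w)))) by ring.
  eapply Rle_trans; [apply Rabs_triang|].
  rewrite Rabs_mult, (Rabs_right (1 - 3 * PI * psi - 2 * PI * w)) by lra.
  assert (Rabs (P - (psi - PI * (3 * psi ^ 2 + 2 * psi * w))) <= w ^ 2 / 5) by (apply Rabs_le; lra).
  simpl in *; nra.
Qed.

Lemma cone_step : exists rho, 0 < rho /\ forall psi w, 0 < w <= rho -> Rabs psi <= w / 10 ->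
  w + 2 / 5 * w ^ 2 <= w3 psi w /\ Rabs (psi3 psi w) <= w3 psi w / 10.
Proof.
  destruct isO_psi3_jet as [C1 [HC1 B1]]; destruct isO_w3_jet as [C2 [HC2 B2]].
  set (rho := Rmin (1 / 10) (/ 10 / (C1 + C2 + 1))).
  assert (Hrho : 0 < rho) by (apply Rmin_pos; [|apply Rdiv_lt_0_compat]; lra).
  exists rho; split; auto; intros psi w Hw Hpsi.
  pose proof (Rmin_l (1 / 10) (/ 10 / (C1 + C2 + 1))) as Hr1.
  pose proof (Rmin_r (1 / 10) (/ 10 / (C1 + C2 + 1))) as Hr2; fold rho in Hr1, Hr2.
  assert (Hs : 0 <= l1norm psi w <= 11 / 10 * w)
    by (split; [apply l1norm_ge0 | unfold l1norm; rewrite (Rabs_right w) by lra; lra]).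
  assert (Hs3 : l1norm psi w ^ 3 <= 2 * w ^ 3).
  { apply Rle_trans with ((11 / 10 * w) ^ 3); [apply pow_incr; lra | simpl; nra]. }
  assert (HCw : (C1 + C2) * w <= / 10) by (apply Rmult_le_small; lra).
  assert (Hsmall : forall C, 0 <= C <= C1 + C2 -> C * l1norm psi w ^ 3 <= w ^ 2 / 5).
  { intros C HC; apply Rle_trans with ((C1 + C2) * (2 * w ^ 3)).
    - apply Rmult_le_compat; try lra; apply pow_le; lra.
    - replace ((C1 + C2) * (2 * w ^ 3)) with (2 * ((C1 + C2) * w) * w ^ 2) by ring.
      assert (0 <= w ^ 2) by (apply pow_le; lra); nra. }
  apply (jet_cone_step psi w); try lra.
  - eapply Rle_trans; [apply B1; lra | apply Hsmall; lra].
  - eapply Rle_trans; [apply B2; lra | apply Hsmall; lra].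
Qed.

Lemma zorbit_of_nat f finv n p : zorbit f finv (Z.of_nat n) p = Nat.iter n f p.
Proof. destruct n; [reflexivity|]; simpl; rewrite SuccNat2Pos.id_succ; reflexivity. Qed.

Lemma iter_f3_mul3 m p : Nat.iter (3 * m) f3 p = Nat.iter m (fun q => f3 (f3 (f3 q))) p.
Proof.
  induction m as [|m IH]; [reflexivity|].
  replace (3 * S m)%nat with (S (S (S (3 * m)))) by lia.
  change (f3 (f3 (f3 (Nat.iter (3 * m) f3 p))) = f3 (f3 (f3 (Nat.iter m (fun q => f3 (f3 (f3 q))) p)))).
  rewrite IH; reflexivity.
Qed.

Section Escape.

Variable rho : R.
Hypothesis Hstep : forall psi w, 0 < w <= rho -> Rabs psi <= w / 10 ->
  w + 2 / 5 * w ^ 2 <= w3 psi w /\ Rabs (psi3 psi w) <= w3 psi w / 10.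

Let orbit (w0 : R) (m : nat) := Nat.iter m (fun q => f3 (f3 (f3 q))) (0, w0).

Lemma orbit_growth w0 m : 0 < w0 -> (forall j, (j < m)%nat -> snd (orbit w0 j) <= rho) ->
  Rabs (fst (orbit w0 m)) <= snd (orbit w0 m) / 10 /\
  w0 + 2 / 5 * INR m * w0 ^ 2 <= snd (orbit w0 m).
Proof.
  intros Hw0; induction m as [|m IH]; intros Hbelow.
  - simpl; rewrite Rabs_R0; lra.
  - destruct IH as [Hcone Hgrow]; [intros j Hj; apply Hbelow; lia|].
    assert (Hm : snd (orbit w0 m) <= rho) by (apply Hbelow; lia).
    change (orbit w0 (S m)) with (f3 (f3 (f3 (orbit w0 m)))).
    destruct (orbit w0 m) as [psi w]; cbn [fst snd] in *; rewrite f3_iter3; cbn [fst snd].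
    assert (Hw : 0 < w) by (pose proof (pos_INR m); assert (0 < w0 ^ 2) by (apply pow_lt; lra); nra).
    destruct (Hstep psi w ltac:(lra) Hcone) as [Hnext Hcone'].
    split; auto; rewrite S_INR.
    assert (w0 ^ 2 <= w ^ 2) by (apply pow_incr; pose proof (pos_INR m); split; nra).
    lra.
Qed.

Lemma orbit_escapes w0 : 0 < w0 -> exists m, rho < snd (orbit w0 m).
Proof.
  intros Hw0; apply NNPP; intros Hstay.
  assert (Hall : forall j, snd (orbit w0 j) <= rho).
  { intros j; apply Rnot_lt_le; intros Hj; apply Hstay; exists j; auto. }
  destruct (INR_archimed (2 / 5 * w0 ^ 2) rho) as [n Hn].
  { assert (0 < w0 ^ 2) by (apply pow_lt; lra); lra. }
  destruct (orbit_growth w0 n Hw0 (fun j _ => Hall j)) as [_ Hgrow].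
  specialize (Hall n); nra.
Qed.

End Escape.

Lemma f3_unstable : ~ locally_stable f3 f3inv (0, 0).
Proof.
  destruct cone_step as [rho [Hrho Hstep]]; intros Hstable.
  destruct (Hstable rho Hrho) as [d [Hd Hnear]].
  set (w0 := d / 2).
  destruct (orbit_escapes rho Hstep w0 ltac:(unfold w0; lra)) as [m Hm].
  destruct (Hnear (0, w0)) with (n := Z.of_nat (3 * m)) as [_ Hsnd].
  - exists 0%Z; simpl; replace (0 - 0 - 2 * PI * 0) with 0 by ring; rewrite Rabs_R0; lra.
  - simpl; rewrite Rminus_0_r, Rabs_right; unfold w0; lra.
  - rewrite zorbit_of_nat, iter_f3_mul3, Rminus_0_r in Hsnd.
    apply Rabs_def2 in Hsnd; lra.
Qed.

Lemma bigO_of_isO k f : isO k f -> bigO k f.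
Proof.
  intros [C [HC H]]; exists C, (1 / 2); split; [lra|].
  intros x y Hx Hy; apply H; unfold l1norm; lra.
Qed.

Theorem mainTheorem6 :
  let F := fun p : R * R => f3 (f3 (f3 p)) in
  bigO 3 (fun psi w =>
    fst (F (psi, w)) - (psi - PI * (3 * psi ^ 2 + 2 * psi * w))) /\
  bigO 3 (fun psi w =>
    snd (F (psi, w)) - (w + PI * (6 * psi ^ 2 + 6 * psi * w + w ^ 2))) /\
  (exists G : R -> R -> R,
     bigO 3 G /\
     (exists r, 0 < r /\ forall psi w, Rabs psi < r -> Rabs w < r ->
        derivable_pt_lim (fun y => G (snd (F (psi, w))) y) psi
          (snd (F (psi, w)) - w) /\
        derivable_pt_lim (fun x => G x psi) (snd (F (psi, w)))
          (psi - fst (F (psi, w)))) /\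
     bigO 4 (fun psi w3 =>
       G w3 psi - PI * psi * (psi + w3) * (2 * psi + w3)) /\
     ~ strict_local_min0 G /\ ~ strict_local_max0 G) /\
  ~ locally_stable f3 f3inv (0, 0).
Proof.
  intros F.
  assert (HF : forall x y, F (x, y) = (psi3 x y, w3 x y)) by (intros; apply f3_iter3).
  destruct inverse_radius_exists as [r Hr]; pose proof Hr as [Hr0 _].
  split; [|split; [|split]].
  - apply bigO_of_isO, (isO_ext 3 (fun x y => psi3 x y - psi3_jet x y)); [|apply isO_psi3_jet].
    intros x y; rewrite HF; reflexivity.
  - apply bigO_of_isO, (isO_ext 3 (fun x y => w3 x y - w3_jet x y)); [|apply isO_w3_jet].
    intros x y; rewrite HF; reflexivity.
  - exists (gen_fun r); split; [apply gen_fun_bigO3; auto|split; [|split]].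
    + exists (r / 2); split; [lra|]; intros psi w Hpsi Hw; rewrite !HF; cbn [fst snd].
      pose proof (is_diff2_gen_fun r psi w Hr Hpsi Hw) as D.
      split; [exact (is_diff2_partial_x _ _ _ _ _ D) | exact (is_diff2_partial_y _ _ _ _ _ D)].
    + destruct (gen_fun_sub_cubic r Hr) as [C [_ B]]; exists C, (r / 8); split; [lra | exact B].
    + apply gen_fun_no_strict_extremum; auto.
  - apply f3_unstable.
Qed.
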